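(* Let $\alpha$ be a relation on a set $X$ such that either (1) $\alpha$ is short, or (2) the set $\langle\alpha\rangle^*$ has the constant domains property. Then $\bigcap\langle\alpha\rangle^*$ is cotransitive (i.e. $\alpha$ is admissible).
   Context: Constructive (intuitionistic) mathematics. The filled product of relations $\alpha,\beta$ on $X$ is $\alpha*\beta=\{(x,y)\mid \forall_{z\in X}(x\alpha z\vee z\beta y)\}$. $\langle\alpha\rangle^*$ is the smallest set of relations on $X$ containing $\alpha$ and closed under $*$; $\bigcap\langle\alpha\rangle^*$ is the intersection of all its members. $\alpha$ is short if there are $n\ge1$ and $\beta_1,\dots,\beta_n\in\langle\alpha\rangle^*$ with $\bigcap\langle\alpha\rangle^*=\beta_1\cap\cdots\cap\beta_n$. A set $Y$ has the constant domains property if $\forall_{y\in Y}(P(y)\vee Q)\Rightarrow(\forall_{y\in Y}P(y))\vee Q$ for all predicates $P(y)$ and propositions $Q$ not containing $y$ free. A relation $\kappa$ is cotransitive if $x\kappa z\Rightarrow(x\kappa y\vee y\kappa z)$ for all $x,y,z$. *)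

Definition relation (X : Type) := X -> X -> Prop.

Definition filled_prod {X : Type} (a b : relation X) : relation X :=
  fun x y => forall z : X, a x z \/ b z y.

Inductive gen_star {X : Type} (a : relation X) : relation X -> Prop :=
  | gen_base : gen_star a a
  | gen_prod : forall b c : relation X,
      gen_star a b -> gen_star a c -> gen_star a (filled_prod b c).

Definition bigcap_star {X : Type} (a : relation X) : relation X :=
  fun x y => forall b : relation X, gen_star a b -> b x y.

Definition short {X : Type} (a : relation X) : Prop :=
  exists (n : nat) (b : nat -> relation X),
    1 <= n /\
    (forall i, i < n -> gen_star a (b i)) /\
    (forall x y : X, bigcap_star a x y <-> (forall i, i < n -> b i x y)).

Definition constant_domains {Y : Type} (S : Y -> Prop) : Prop :=
  forall (P : Y -> Prop) (Q : Prop),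
    (forall y : Y, S y -> P y \/ Q) -> (forall y : Y, S y -> P y) \/ Q.

Definition cotransitive {X : Type} (k : relation X) : Prop :=
  forall x y z : X, k x z -> k x y \/ k y z.

From Stdlib Require Import Lia.

(* Fix x, y, z with x (bigcap <alpha>^* ) z.  For any
   beta, gamma in <alpha>^* the filled product beta * gamma again lies in
   <alpha>^*, so x (beta * gamma) z; instantiating its universal quantifier
   at y gives  x beta y \/ y gamma z.  Cotransitivity asks to pull the two
   universal quantifiers over beta and gamma out of this disjunction, i.e.
   to conclude (forall beta, x beta y) \/ (forall gamma, y gamma z).
   This "splitting" of a pairwise disjunction holds for every index set with
   the constant domains property (two applications of it).  Hypothesis (2)
   gives it for <alpha>^* directly; under hypothesis (1) we apply it to the
   finite index set {i | i < n}, which has constant domains by induction on n,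
   and transport the result along bigcap <alpha>^* = beta_1 /\ ... /\ beta_n. *)

Lemma constant_domains_split {Y : Type} (S : Y -> Prop) :
  constant_domains S ->
  forall P Q : Y -> Prop,
    (forall b c, S b -> S c -> P b \/ Q c) ->
    (forall b, S b -> P b) \/ (forall c, S c -> Q c).
Proof.
  intros CD P Q HPQ.
  assert (Hc : forall c, S c -> (forall b, S b -> P b) \/ Q c).
  { intros c Sc. apply CD. intros b Sb. exact (HPQ b c Sb Sc). }
  destruct (CD Q (forall b, S b -> P b)) as [HQ | HP].
  - intros c Sc. destruct (Hc c Sc); [right | left]; assumption.
  - right; exact HQ.
  - left; exact HP.
Qed.

Lemma bounded_constant_domains (n : nat) : constant_domains (fun i => i < n).
Proof.
  induction n as [|n IH]; intros P Q H.
  - left; intros i Hi; lia.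
  - destruct (IH P Q (fun i (Hi : i < n) => H i ltac:(lia))) as [HP | HQ]; [| right; exact HQ].
    destruct (H n ltac:(lia)) as [Pn | HQ]; [| right; exact HQ].
    left; intros i Hi.
    destruct (PeanoNat.Nat.eq_dec i n) as [-> | Hne]; [exact Pn |].
    apply HP; lia.
Qed.

Lemma bigcap_star_pair {X : Type} (a : relation X) (x y z : X) (b c : relation X) :
  bigcap_star a x z -> gen_star a b -> gen_star a c -> b x y \/ c y z.
Proof.
  intros Hxz Hb Hc. exact (Hxz _ (gen_prod a b c Hb Hc) y).
Qed.

Lemma cotransitive_of_constant_domains {X : Type} (a : relation X) :
  constant_domains (gen_star a) -> cotransitive (bigcap_star a).
Proof.
  intros CD x y z Hxz.
  exact (constant_domains_split _ CD (fun b => b x y) (fun c => c y z)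
           (fun b c Hb Hc => bigcap_star_pair a x y z b c Hxz Hb Hc)).
Qed.

Lemma cotransitive_of_short {X : Type} (a : relation X) :
  short a -> cotransitive (bigcap_star a).
Proof.
  intros [n [b [_ [Hgen Heq]]]] x y z Hxz.
  destruct (constant_domains_split _ (bounded_constant_domains n)
              (fun i => b i x y) (fun j => b j y z)) as [Hxy | Hyz].
  - intros i j Hi Hj. exact (bigcap_star_pair a x y z _ _ Hxz (Hgen i Hi) (Hgen j Hj)).
  - left; apply Heq; exact Hxy.
  - right; apply Heq; exact Hyz.
Qed.

Theorem mainTheorem5 (X : Type) (a : relation X) :
  short a \/ constant_domains (gen_star a) ->
  cotransitive (bigcap_star a).
Proof.
  intros [Hshort | CD].
  - exact (cotransitive_of_short a Hshort).
  - exact (cotransitive_of_constant_domains a CD).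
Qed.
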